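(* Let $n>3$ be an integer and let $L(n)$ be the graph defined in the context below. Then $-1$ and $n-2$ are eigenvalues of $L(n)$ (i.e., of its adjacency matrix).
   Context: Let $[n]=\{1,2,\dots,n\}$. Let $H(n)$ be the graph whose vertex set is $\{v : v\subseteq [n],\ |v|\in\{1,2\}\}$, where two vertices $v,w$ are adjacent if and only if $v\subset w$ or $w\subset v$ (equivalently, $H(n)$ is the subgraph of the hypercube $Q_n$ induced by the vertices of weight $1$ and $2$). Let $L(n)$ be the line graph of $H(n)$: its vertices are the edges $\{\{i\},\{i,j\}\}$ of $H(n)$ (with $i\neq j$ in $[n]$), denoted $[i,ij]$, and two such vertices are adjacent iff, as edges of $H(n)$, they share exactly one endpoint. The eigenvalues of a graph are the eigenvalues of its adjacency matrix. *)

From HB Require Import structures.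
From mathcomp Require Import all_boot all_order all_algebra.
Set Implicit Arguments. Unset Strict Implicit. Unset Printing Implicit Defensive.
Import GRing.Theory Num.Theory.
Local Open Scope ring_scope.

(* Vertices of L(n): the edges [i, ij] of H(n), encoded as ordered pairs
   (i, j) of distinct elements of [n] = 'I_n. *)
Definition Lvert (n : nat) := {p : 'I_n * 'I_n | p.1 != p.2}.

Definition Lends (n : nat) (v : Lvert n) : {set {set 'I_n}} :=
  [set [set (val v).1]; [set (val v).1; (val v).2]].

Definition Ladj (n : nat) (v w : Lvert n) : bool :=
  #|Lends v :&: Lends w| == 1%N.

Definition L_adjmx (R : nzRingType) (n : nat) : 'M[R]_(#|{: Lvert n}|) :=
  \matrix_(a, b) (Ladj (enum_val a) (enum_val b))%:R.

(* A vertex [i, ij] of L(n) is the ordered pair (i, j); it is adjacent to the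
   (i, k) with k <> j (common endpoint {i}) and to (j, i) (common endpoint
   {i, j}).  Hence, for any g : [n] -> R with zero sum, x(i, j) = g(j) is an
   eigenvector for -1 and x(i, j) = (n - 1) g(i) + g(j) one for n - 2;
   g = delta_0 - delta_1 makes both nonzero at (2, 0). *)

From mathcomp Require Import all_boot all_order all_algebra.
From mathcomp Require Import ring.
Set Implicit Arguments. Unset Strict Implicit. Unset Printing Implicit Defensive.
Import GRing.Theory Num.Theory.
Local Open Scope ring_scope.

Section FinsetCounting.
Variable T : finType.
Implicit Types (a b i j k l : T) (C : {set T}).

Lemma cards1I a C : #|[set a] :&: C| = (a \in C).
Proof.
have [aC | aC] := boolP (a \in C); first by rewrite (setIidPl _) ?cards1 ?sub1set.
by move: aC; rewrite -disjoints1 -setI_eq0 => /eqP->; rewrite cards0.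
Qed.

Lemma cards2I a b C : a != b -> #|[set a; b] :&: C| = ((a \in C) + (b \in C))%N.
Proof.
move=> neq_ab; rewrite setIUl cardsU !cards1I setIACA setIid.
have /eqP-> : [set a] :&: [set b] == set0 by rewrite setI_eq0 disjoints1 in_set1.
by rewrite set0I cards0 subn0.
Qed.

Lemma set1_neq_set2 i k l : k != l -> [set i] != [set k; l].
Proof.
by move=> neq_kl; apply/eqP => eq_set; move: (cards2 k l); rewrite -eq_set cards1 neq_kl.
Qed.

Lemma eq_set2 i j k l : i != j ->
  ([set i; j] == [set k; l]) = (i == k) && (j == l) || (i == l) && (j == k).
Proof.
move=> neq_ij; apply/eqP/idP => [eq_set | /orP[] /andP[/eqP-> /eqP->] //];
  last by rewrite setUC.
move: neq_ij; have : (i \in [set k; l]) && (j \in [set k; l]).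
  by rewrite -eq_set set21 set22.
rewrite !in_set2 => /andP[/orP[]/eqP-> /orP[]/eqP->].
all: by rewrite ?eqxx ?orbT.
Qed.
End FinsetCounting.

Lemma LadjE n (v w : Lvert n) : Ladj v w =
  ((val v).1 == (val w).1) && ((val v).2 != (val w).2)
  || ((val v).1 == (val w).2) && ((val v).2 == (val w).1).
Proof.
case: v w => [[i j] /= neq_ij] [[k l] /= neq_kl].
rewrite /Ladj /Lends /= cards2I ?set1_neq_set2 // !in_set2 (inj_eq set1_inj).
rewrite [[set i; j] == _]eq_sym !(negbTE (set1_neq_set2 _ _)) // eq_set2 //.
case: (eqVneq i k) => [<- | neq_ik] /=.
- by rewrite [j == i]eq_sym (negbTE neq_ij) andbF !orbF; case: (j == l).
- by rewrite add0n; case: (_ && _).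
Qed.

Definition Lrow (R : nzRingType) n (f : 'I_n -> 'I_n -> R) : 'rV[R]_#|{: Lvert n}| :=
  \row_k f (val (enum_val k)).1 (val (enum_val k)).2.

Lemma sum_Lvert (R : nzRingType) n (F : 'I_n -> 'I_n -> R) :
  \sum_(k < #|{: Lvert n}|) F (val (enum_val k)).1 (val (enum_val k)).2
    = \sum_i \sum_(j | i != j) F i j.
Proof.
rewrite -(big_enum_val (fun v : Lvert n => F (val v).1 (val v).2)) pair_big_dep.
by rewrite (big_sub [pred p : 'I_n * 'I_n | p.1 != p.2]).
Qed.

Lemma sumr_neq2 (V : zmodType) (I : finType) (F : I -> V) (a c : I) : a != c ->
  \sum_(j | (j != a) && (j != c)) F j = \sum_j F j - F a - F c.
Proof.
move=> neq_ac; rewrite [\sum_j F j](bigD1 a) //.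
rewrite [\sum_(j | j != a) F j](bigD1 c) 1?eq_sym //=.
by rewrite (addrC (F a)) addrK (addrC (F c)) addrK.
Qed.

Lemma Lrow_mul_adjmx (R : nzRingType) n (f : 'I_n -> 'I_n -> R) :
  Lrow f *m L_adjmx R n = Lrow (fun a c => \sum_(j | (j != a) && (j != c)) f a j + f c a).
Proof.
apply/rowP => b; rewrite !mxE; under eq_bigr do rewrite !mxE.
case: (enum_val b) => [[a c] /= neq_ac]; under eq_bigr do rewrite LadjE /=.
rewrite (sum_Lvert (fun i j => f i j * ((i == a) && (j != c) || (i == c) && (j == a))%:R)).
have neq_ca : c != a by rewrite eq_sym.
rewrite (bigD1 a) // [X in _ + X = _](bigD1 c) //= [X in _ + (_ + X) = _]big1 => [|i].
  rewrite addr0 !eqxx (negbTE neq_ac) (negbTE neq_ca) /=; congr (_ + _).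
    rewrite big_mkcondr; apply: eq_big => [j | j _]; first by rewrite eq_sym.
    by rewrite orbF mulr_natr mulrb.
  rewrite (bigD1 a) //= eqxx mulr1 big1 ?addr0 // => j /andP[_ /negbTE->].
  exact: mulr0.
move=> /andP[/negbTE ne_ia /negbTE ne_ic]; apply: big1 => j _.
by rewrite ne_ia ne_ic mulr0.
Qed.

Lemma Lrow_eigenN1 (R : nzRingType) n (g : 'I_n -> R) : \sum_j g j = 0 ->
  Lrow (fun _ j => g j) *m L_adjmx R n = -1 *: Lrow (fun _ j => g j).
Proof.
move=> sum_g0; rewrite Lrow_mul_adjmx; apply/rowP => k; rewrite !mxE.
case: (enum_val k) => [[a c] /= neq_ac].
by rewrite sumr_neq2 // sum_g0 sub0r addrAC addNr sub0r mulN1r.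
Qed.

Lemma Lrow_eigen_nsub2 (R : comNzRingType) n (g : 'I_n -> R) : \sum_j g j = 0 ->
  Lrow (fun i j => (n%:R - 1) * g i + g j) *m L_adjmx R n
    = (n%:R - 2) *: Lrow (fun i j => (n%:R - 1) * g i + g j).
Proof.
move=> sum_g0; rewrite Lrow_mul_adjmx; apply/rowP => k; rewrite !mxE.
case: (enum_val k) => [[a c] /= neq_ac].
by rewrite sumr_neq2 // big_split /= sum_g0 sumr_const card_ord; ring.
Qed.

Lemma eigenvalue_Lrow (F : fieldType) n (f : 'I_n -> 'I_n -> F) (a : F) (i j : 'I_n) :
  i != j -> f i j != 0 -> Lrow f *m L_adjmx F n = a *: Lrow f ->
  eigenvalue (L_adjmx F n) a.
Proof.
move=> neq_ij fij_neq0 eigen_f; apply/eigenvalueP; exists (Lrow f) => //.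
apply: contra fij_neq0 => /eqP/rowP/(_ (enum_rank (exist _ (i, j) neq_ij))).
by rewrite !mxE enum_rankK => ->.
Qed.

Theorem proposition3p3 (R : realFieldType) (n : nat) (hn : (3 < n)%N) :
  eigenvalue (L_adjmx R n) (-1) /\ eigenvalue (L_adjmx R n) ((n - 2)%N)%:R.
Proof.
have n_gt2 : (2 < n)%N := ltnW hn.
pose i0 : 'I_n := Ordinal (ltnW (ltnW n_gt2)).
pose i1 : 'I_n := Ordinal (ltnW n_gt2).
pose i2 : 'I_n := Ordinal n_gt2.
pose g j : R := (j == i0)%:R - (j == i1)%:R.
have sum_delta (i : 'I_n) : \sum_j (j == i)%:R = 1 :> R.
  by rewrite (bigD1 i) //= eqxx big1 ?addr0 // => j /negbTE->.
have sum_g0 : \sum_j g j = 0 by rewrite sumrB !sum_delta subrr.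
have g_i0 : g i0 = 1 by rewrite /g eqxx subr0.
have g_i2 : g i2 = 0 by rewrite /g subrr.
split.
  apply: (eigenvalue_Lrow (i := i2) (j := i0) _ _ (Lrow_eigenN1 sum_g0)) => //=.
  by rewrite g_i0 oner_neq0.
rewrite natrB 1?ltnW //.
apply: (eigenvalue_Lrow (i := i2) (j := i0) _ _ (Lrow_eigen_nsub2 sum_g0)) => //=.
by rewrite g_i0 g_i2 mulr0 add0r oner_neq0.
Qed.
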